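(* Let $(X,Y)\sim p_{XY}$ be jointly distributed finite-valued random variables. Then $p_{XY}$ is saturable, i.e. $I(X;Y|Q_* )=0$, iff there exists a conditional pmf $p_{Q|XY}$ (with $Q$ finite-valued) such that $X-Q-Y$, $Q-X-Y$ and $Q-Y-X$ are all Markov chains.
   Context: For finite-valued random variables, $A-B-C$ means that $A$ and $C$ are conditionally independent given $B$. $Q_*$ is the maximal common random variable of $X$ and $Y$: consider the bipartite graph on vertex set $\mathcal{X}\cup\mathcal{Y}$ (disjoint union of the alphabets) with an edge between $x$ and $y$ iff $p_{XY}(x,y)>0$, and let $Q_*$ be the index of the connected component containing the realized pair $(X,Y)$. *)

From HB Require Import structures.
From mathcomp Require Import all_boot all_order all_algebra.
From mathcomp Require Import reals exp.
Set Implicit Arguments. Unset Strict Implicit. Unset Printing Implicit Defensive.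
Import Order.TTheory GRing.Theory Num.Theory.
Local Open Scope ring_scope.

Section Info.
Variable R : realType.

Definition is_pmf2 (A B : finType) (p : A -> B -> R) : Prop :=
  (forall a b, 0 <= p a b) /\ \sum_(a : A) \sum_(b : B) p a b = 1.

Definition is_pmf1 (A : finType) (p : A -> R) : Prop :=
  (forall a, 0 <= p a) /\ \sum_(a : A) p a = 1.

Section Three.
Variables (A B C : finType) (P : A -> B -> C -> R).
Definition margAB a b := \sum_(c : C) P a b c.
Definition margAC a c := \sum_(b : B) P a b c.
Definition margBC b c := \sum_(a : A) P a b c.
Definition margB b := \sum_(a : A) \sum_(c : C) P a b c.
Definition margC c := \sum_(a : A) \sum_(b : B) P a b c.

(* Markov chain A - B - C : A and C conditionally independent given B,
   i.e. p(a,b,c) p(b) = p(a,b) p(b,c) for all a, b, c. *)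
Definition markov : Prop :=
  forall a b c, P a b c * margB b = margAB a b * margBC b c.

(* conditional mutual information I(A;B|C) (natural log; 0 log 0 = 0) *)
Definition cmi : R :=
  \sum_(a : A) \sum_(b : B) \sum_(c : C)
    (if 0 < P a b c then
       P a b c * ln (P a b c * margC c / (margAC a c * margBC b c))
     else 0).
End Three.

Section Common.
Variables (X Y : finType) (p : X -> Y -> R).

Definition bip_edge : rel (X + Y)%type := fun u v =>
  match u, v with
  | inl x, inr y => 0 < p x y
  | inr y, inl x => 0 < p x y
  | _, _ => false
  end.

(* maximal common random variable Q_star: the connected component of the
   realized pair, labelled by its canonical representative vertex *)
Definition Qstar (x : X) (y : Y) : (X + Y)%type := fingraph.root bip_edge (inl x).

Definition joint_Qstar (x : X) (y : Y) (q : (X + Y)%type) : R :=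
  if q == Qstar x y then p x y else 0.

Definition saturable : Prop := cmi joint_Qstar = 0.
End Common.
End Info.

(* By Gibbs' inequality, [I(X;Y|Q* ) = 0] forces [X - Q* - Y]; and [Q*], being
   a function of [X] and, on the support of [p], of [Y], also satisfies [Q* - X - Y] and
   [Q* - Y - X].  Conversely, [Q - X - Y] and [Q - Y - X] say that the law of [Q] given
   [(x, y)] depends only on [x] and only on [y]; so it is constant on each connected
   component of the bipartite graph.  Summing [X - Q - Y] over a component [k] then gives
   [p(x, y) P(Q* = k) = p(x) p(y)] there, which makes every term of [I(X;Y|Q* )] vanish. *)

From HB Require Import structures.
From mathcomp Require Import all_boot all_order all_algebra.
From mathcomp Require Import boolp reals exp ring lra.
Set Implicit Arguments. Unset Strict Implicit. Unset Printing Implicit Defensive.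
Import Order.TTheory GRing.Theory Num.Theory.
Local Open Scope ring_scope.

Section Divergence.
Variable R : realType.

Lemma ln_le_subr1 (u : R) : 0 < u -> ln u <= u - 1.
Proof. by move=> u0; have := @le_ln1Dx R (u - 1); rewrite [1 + _]addrC subrK; apply; lra. Qed.

Lemma ln_eq_subr1 (u : R) : 0 < u -> ln u = u - 1 -> u = 1.
Proof.
move=> u0 lnu.
(* At [s = sqrt u], [2 ln s = s^2 - 1] and [ln s <= s - 1] force [(s - 1)^2 <= 0]. *)
set s := Num.sqrt u.
have s0 : 0 < s by rewrite sqrtr_gt0.
have us : u = s ^+ 2 by rewrite sqr_sqrtr // ltW.
have lns : ln s + ln s = s ^+ 2 - 1 by rewrite -mulr2n -lnXn // -us.
have := ln_le_subr1 s0 => lnle.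
rewrite us (_ : s = 1) ?expr1n //; nra.
Qed.

Lemma le_mul_ln_div (a b : R) : 0 < a -> 0 < b -> a - b <= a * ln (a / b).
Proof.
move=> a0 b0; have ba0 : 0 < b / a by rewrite divr_gt0.
have := ln_le_subr1 ba0.
rewrite -[a / b]invf_div lnV ?posrE //.
have : a * (b / a) = b by rewrite mulrC divfK // gt_eqF.
nra.
Qed.

Lemma mul_ln_div_eq (a b : R) : 0 < a -> 0 < b -> a * ln (a / b) = a - b -> a = b.
Proof.
move=> a0 b0; have ba0 : 0 < b / a by rewrite divr_gt0.
rewrite -[a / b]invf_div lnV ?posrE // => lnab.
have aba : a * (b / a) = b by rewrite mulrC divfK // gt_eqF.
have : ln (b / a) = b / a - 1.
  by apply: (mulfI (lt0r_neq0 a0)); rewrite mulrBr mulr1 aba; lra.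
by move/(ln_eq_subr1 ba0)/divr1_eq.
Qed.

Definition divergence (I : finType) (P Q : I -> R) : R :=
  \sum_i (if 0 < P i then P i * ln (P i / Q i) else 0).

Lemma divergence_eq0 (I : finType) (P Q : I -> R) :
  (forall i, 0 <= P i) -> (forall i, 0 <= Q i) -> (forall i, 0 < P i -> 0 < Q i) ->
  \sum_i Q i <= \sum_i P i -> divergence P Q = 0 -> P =1 Q.
Proof.
move=> P0 Q0 PQ sQP D0.
pose t i := (if 0 < P i then P i * ln (P i / Q i) else 0) - P i + Q i.
have t0 i : 0 <= t i.
  rewrite /t; case: ifPn => [Pi|]; first by have := le_mul_ln_div Pi (PQ _ Pi); lra.
  by rewrite -leNgt => Pi; have := Q0 i; lra.
have st : \sum_i t i = 0.
  apply/eqP; rewrite eq_le sumr_ge0 // andbT.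
  by rewrite /t big_split sumrB /= -/(divergence P Q) D0; lra.
move=> i; have : t i = 0 by apply: (psumr_eq0P (fun j _ => t0 j) st).
rewrite /t; case: ifPn => [Pi ti|]; first by apply: mul_ln_div_eq Pi (PQ _ Pi) _; lra.
by rewrite -leNgt => Pi; have := P0 i; lra.
Qed.

End Divergence.

Section ConditionalIndependence.
Variables (R : realType) (A B C : finType) (P : A -> B -> C -> R).
Hypothesis P_ge0 : forall a b c, 0 <= P a b c.

Lemma margAC_ge0 a c : 0 <= margAC P a c.
Proof. exact: sumr_ge0. Qed.

Lemma margBC_ge0 b c : 0 <= margBC P b c.
Proof. exact: sumr_ge0. Qed.

Lemma margC_ge0 c : 0 <= margC P c.
Proof. by apply: sumr_ge0 => a _; apply: margAC_ge0. Qed.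

Lemma le_margAC a b c : P a b c <= margAC P a c.
Proof. by rewrite /margAC (bigD1 b) //= lerDl sumr_ge0. Qed.

Lemma le_margBC a b c : P a b c <= margBC P b c.
Proof. by rewrite /margBC (bigD1 a) //= lerDl sumr_ge0. Qed.

Lemma le_margAC_margC a c : margAC P a c <= margC P c.
Proof. by rewrite /margC (bigD1 a) //= lerDl sumr_ge0 // => a' _; apply: margAC_ge0. Qed.

Lemma sum3_pair (F : A -> B -> C -> R) :
  \sum_a \sum_b \sum_c F a b c = \sum_(t : A * B * C) F t.1.1 t.1.2 t.2.
Proof. by rewrite pair_big /= pair_big. Qed.

Lemma sum_margAC_margBC_div :
  \sum_a \sum_b \sum_c margAC P a c * margBC P b c / margC P c =
  \sum_a \sum_b \sum_c P a b c.
Proof.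
under eq_bigr do rewrite exchange_big /=.
under [RHS]eq_bigr do rewrite exchange_big /=.
rewrite exchange_big [RHS]exchange_big; apply: eq_bigr => c _ /=.
under eq_bigr do rewrite -mulr_suml.
rewrite -mulr_suml -big_distrlr /=.
have -> : \sum_b margBC P b c = margC P c by rewrite /margBC exchange_big.
change (margC P c * margC P c / margC P c = margC P c).
by have [->|C0] := eqVneq (margC P c) 0; rewrite ?mul0r ?mulfK.
Qed.

(* [I(A;B|C)] is the divergence of [P] from [p(a|c) p(b|c) p(c)], which has the same
   total mass, so it vanishes only when the two coincide. *)
Lemma cmi_eq0_markov : cmi P = 0 -> markov (fun a c b => P a b c).
Proof.
move=> I0.
pose Pt (t : A * B * C) := P t.1.1 t.1.2 t.2.
pose Qt (t : A * B * C) := margAC P t.1.1 t.2 * margBC P t.1.2 t.2 / margC P t.2.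
have PQ : Pt =1 Qt.
  apply: divergence_eq0 => [t|t|[[a b] c] /= Pabc|| ].
  - exact: P_ge0.
  - by rewrite /Qt divr_ge0 ?mulr_ge0 ?margAC_ge0 ?margBC_ge0 ?margC_ge0.
  - have ACpos := lt_le_trans Pabc (le_margAC a b c).
    have BCpos := lt_le_trans Pabc (le_margBC a b c).
    have Cpos := lt_le_trans ACpos (le_margAC_margC a c).
    by rewrite /Qt divr_gt0 ?mulr_gt0.
  - rewrite /Pt /Qt -(sum3_pair (fun a b c => P a b c)).
    rewrite -(sum3_pair (fun a b c => margAC P a c * margBC P b c / margC P c)).
    by rewrite sum_margAC_margBC_div.
  - by rewrite -I0 /cmi sum3_pair; apply: eq_bigr => t _; rewrite /Pt /Qt invf_div mulrA.
move=> a c b; change (P a b c * margC P c = margAC P a c * margBC P b c).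
have := PQ (a, b, c); rewrite /Pt /Qt /= => ->.
have [C0|C0] := eqVneq (margC P c) 0; last by rewrite divfK.
have -> : margAC P a c = 0.
  by apply/le_anti; rewrite margAC_ge0 -C0 le_margAC_margC.
by rewrite C0 !mul0r.
Qed.

End ConditionalIndependence.

Section MarkovChains.
Variables (R : realType) (A B C : finType).

Lemma eq_markov (P P' : A -> B -> C -> R) :
  (forall a b c, P a b c = P' a b c) -> markov P -> markov P'.
Proof.
by move=> PP'; have -> : P = P' by apply: funext => a; apply: funext => b; apply: funext.
Qed.

Lemma markov_det_left (g : B -> A) (P : B -> C -> R) :
  markov (fun a b c => if a == g b then P b c else 0).
Proof.
move=> a b c; rewrite /margB /margAB /margBC exchange_big /=.
have sum_g (F : R) : \sum_a (if a == g b then F else 0) = F.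
  by rewrite -big_mkcond big_pred1_eq.
under eq_bigr do rewrite sum_g.
rewrite sum_g; case: eqP => _; last by rewrite big1_eq !mul0r.
by rewrite mulrC.
Qed.

End MarkovChains.

Lemma connect_ind (T : finType) (e : rel T) (G : T -> Prop) :
  (forall u v, e u v -> G u -> G v) -> forall u v, connect e u v -> G u -> G v.
Proof.
move=> eG u v /connectP [s es ->]; elim: s u es => [|w s IHs] u //= /andP [euw es] Gu.
exact: IHs es (eG _ _ euw Gu).
Qed.

Section MaximalCommonVariable.
Variables (R : realType) (X Y : finType) (p : X -> Y -> R).
Hypothesis p_ge0 : forall x y, 0 <= p x y.

Local Notation e := (bip_edge p).
Local Notation rootX x := (fingraph.root (bip_edge p) (inl x)).
Local Notation rootY y := (fingraph.root (bip_edge p) (inr y)).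

Lemma bip_edge_sym : symmetric e.
Proof. by move=> [x|y] [x'|y']. Qed.

Lemma connect_sym_bip_edge : connect_sym e.
Proof. exact: sym_connect_sym bip_edge_sym. Qed.

Lemma rootX_rootY x y : 0 < p x y -> rootX x = rootY y.
Proof. by move=> pxy; apply/eqP; rewrite (root_connect connect_sym_bip_edge) connect1. Qed.

Lemma joint_Qstar_ge0 x y q : 0 <= joint_Qstar p x y q.
Proof. by rewrite /joint_Qstar; case: ifP. Qed.

Lemma joint_QstarE_r x y q : joint_Qstar p x y q = if q == rootY y then p x y else 0.
Proof.
have := p_ge0 x y; rewrite le0r => /orP [/eqP pxy|/rootX_rootY <-] //.
by rewrite /joint_Qstar pxy !if_same.
Qed.

Lemma sum_rootY x k : rootX x == k -> \sum_y p x y = \sum_(y | rootY y == k) p x y.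
Proof.
move=> /eqP xk; rewrite [RHS]big_mkcond; apply: eq_bigr => y _.
have := p_ge0 x y; rewrite le0r => /orP [/eqP ->|/rootX_rootY <-]; first by rewrite if_same.
by rewrite xk eqxx.
Qed.

Lemma sum_rootX y k : rootY y == k -> \sum_x p x y = \sum_(x | rootX x == k) p x y.
Proof.
move=> /eqP yk; rewrite [RHS]big_mkcond; apply: eq_bigr => x _.
have := p_ge0 x y; rewrite le0r => /orP [/eqP ->|/rootX_rootY ->]; first by rewrite if_same.
by rewrite yk eqxx.
Qed.

Lemma margAC_joint_Qstar x k :
  margAC (joint_Qstar p) x k = if k == rootX x then \sum_y p x y else 0.
Proof. by rewrite /margAC /joint_Qstar /Qstar; case: ifP => // _; rewrite big1. Qed.

Lemma margBC_joint_Qstar y k :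
  margBC (joint_Qstar p) y k = if k == rootY y then \sum_x p x y else 0.
Proof.
rewrite /margBC; under eq_bigr do rewrite joint_QstarE_r.
by case: ifP => // _; rewrite big1.
Qed.

Lemma margC_joint_Qstar k :
  margC (joint_Qstar p) k = \sum_(x | rootX x == k) \sum_y p x y.
Proof.
rewrite /margC [RHS]big_mkcond; apply: eq_bigr => x _.
by rewrite -/(margAC _ x k) margAC_joint_Qstar eq_sym.
Qed.

Lemma margC_joint_Qstar_r k :
  margC (joint_Qstar p) k = \sum_(y | rootY y == k) \sum_x p x y.
Proof.
rewrite margC_joint_Qstar; under eq_bigr => x xk do rewrite (sum_rootY xk).
by rewrite exchange_big; apply: eq_bigr => y yk; rewrite (sum_rootX yk).
Qed.

Lemma saturable_markov_XQY : saturable p -> markov (fun x q y => joint_Qstar p x y q).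
Proof. exact/cmi_eq0_markov/joint_Qstar_ge0. Qed.

Lemma markov_QXY : markov (fun q x y => joint_Qstar p x y q).
Proof. exact: (markov_det_left (fun x => rootX x) p). Qed.

Lemma markov_QYX : markov (fun q y x => joint_Qstar p x y q).
Proof.
apply: eq_markov (markov_det_left (fun y => rootY y) (fun y x => p x y)) => q y x.
by rewrite joint_QstarE_r.
Qed.

End MaximalCommonVariable.

Section FromMarkovChains.
Variables (R : realType) (X Y Q : finType) (p : X -> Y -> R) (W : X -> Y -> Q -> R).
Hypothesis p_ge0 : forall x y, 0 <= p x y.
Hypothesis W_pmf : forall x y, is_pmf1 (W x y).
Hypothesis XQY : markov (fun x q y => p x y * W x y q).
Hypothesis QXY : markov (fun q x y => p x y * W x y q).
Hypothesis QYX : markov (fun q y x => p x y * W x y q).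

Local Notation e := (bip_edge p).
Local Notation rootX x := (fingraph.root (bip_edge p) (inl x)).
Local Notation rootY y := (fingraph.root (bip_edge p) (inr y)).

Let pX x := \sum_y p x y.
Let pY y := \sum_x p x y.
Let pXQ x q := \sum_y p x y * W x y q.
Let pQY q y := \sum_x p x y * W x y q.
Let pQ q := \sum_x \sum_y p x y * W x y q.

Lemma sum_W x y : \sum_q W x y q = 1.
Proof. by case: (W_pmf x y). Qed.

Lemma le_pX x y : p x y <= pX x.
Proof. by rewrite /pX (bigD1 y) //= lerDl sumr_ge0. Qed.

Lemma le_pY x y : p x y <= pY y.
Proof. by rewrite /pY (bigD1 x) //= lerDl sumr_ge0. Qed.

Lemma QXY_cond q x y : p x y * W x y q * pX x = pXQ x q * p x y.
Proof.
have := QXY q x y; rewrite /margB /margAB /margBC /= exchange_big /=.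
under eq_bigr do rewrite -mulr_sumr sum_W mulr1.
by rewrite -mulr_sumr sum_W mulr1.
Qed.

Lemma QYX_cond q x y : p x y * W x y q * pY y = pQY q y * p x y.
Proof.
have := QYX q y x; rewrite /margB /margAB /margBC /= exchange_big /=.
under eq_bigr do rewrite -mulr_sumr sum_W mulr1.
by rewrite -mulr_sumr sum_W mulr1.
Qed.

Section Component.
Variables (x0 : X) (y0 : Y).
Hypothesis pxy0 : 0 < p x0 y0.
Let r := W x0 y0.
Let k := rootX x0.

(* The law of [Q] given the vertex [v] is [r]: [Q - X - Y] and [Q - Y - X] propagate this
   along edges, hence to the whole component of [x0]. *)
Let agrees (v : X + Y) : Prop :=
  match v with
  | inl x => forall q, pXQ x q = pX x * r q
  | inr y => forall q, pQY q y = pY y * r q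
  end.

Lemma W_eq_l x y q : agrees (inl x) -> 0 < p x y -> W x y q = r q.
Proof.
move=> /= ax pxy; have pX0 := lt_le_trans pxy (le_pX x y).
have := QXY_cond q x y; rewrite ax => cond.
by apply: (mulIf (lt0r_neq0 pX0)); apply: (mulIf (lt0r_neq0 pxy)); nra.
Qed.

Lemma W_eq_r x y q : agrees (inr y) -> 0 < p x y -> W x y q = r q.
Proof.
move=> /= ay pxy; have pY0 := lt_le_trans pxy (le_pY x y).
have := QYX_cond q x y; rewrite ay => cond.
by apply: (mulIf (lt0r_neq0 pY0)); apply: (mulIf (lt0r_neq0 pxy)); nra.
Qed.

Lemma agrees_edge u v : e u v -> agrees u -> agrees v.
Proof.
case: u v => [x|y] [x'|y'] //= pxy au q; apply: (mulIf (lt0r_neq0 pxy)).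
- by rewrite -QYX_cond (W_eq_l q au pxy); ring.
- by rewrite -QXY_cond (W_eq_r q au pxy); ring.
Qed.

Lemma agrees_component v : fingraph.root e v == k -> agrees v.
Proof.
rewrite eq_sym (root_connect (connect_sym_bip_edge p)) => /connect_ind; apply.
  exact: agrees_edge.
by move=> q; apply: (mulIf (lt0r_neq0 pxy0)); rewrite -QXY_cond /r; ring.
Qed.

Lemma component_factor x y q : rootX x == k -> rootY y == k ->
  p x y * r q * pQ q = pX x * pY y * (r q * r q).
Proof.
move=> xk yk; have := XQY x q y.
rewrite -[margAB _ x q]/(pXQ x q) -[margBC _ q y]/(pQY q y) -[margB _ q]/(pQ q).
rewrite (agrees_component (v := inl x) xk) (agrees_component (v := inr y) yk).
have := p_ge0 x y; rewrite le0r => /orP [/eqP ->|pxy].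
  by rewrite !mul0r => ->; ring.
by rewrite (W_eq_l q (agrees_component (v := inl x) xk) pxy) => ->; ring.
Qed.

Lemma exists_W_gt0 : exists q, 0 < r q.
Proof.
have [q /andP [_ rq]] : exists q, true && (0 < r q).
  apply: psumr_neq0P => [q _|]; first by case: (W_pmf x0 y0).
  by rewrite /r sum_W; apply/eqP; rewrite oner_eq0.
by exists q.
Qed.

Lemma cond_indep_given_Qstar : p x0 y0 * margC (joint_Qstar p) k = pX x0 * pY y0.
Proof.
have [q0 rq0] := exists_W_gt0.
set S := margC (joint_Qstar p) k.
have S0 : 0 < S.
  apply: lt_le_trans pxy0 (le_trans (le_pX x0 y0) _).
  by rewrite /S margC_joint_Qstar // (bigD1 x0) //= lerDl sumr_ge0 // => x _; exact: sumr_ge0.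
have xS : \sum_(x | rootX x == k) pX x = S by rewrite /S margC_joint_Qstar.
have yS : \sum_(y | rootY y == k) pY y = S by rewrite /S margC_joint_Qstar_r.
have xyS : \sum_(x | rootX x == k) \sum_(y | rootY y == k) p x y = S.
  by rewrite -xS; apply: eq_bigr => x xk; rewrite -sum_rootY.
have pQS : pQ q0 = S * r q0.
  apply: (mulIf (lt0r_neq0 rq0)); apply: (mulfI (lt0r_neq0 S0)).
  have : (\sum_(x | rootX x == k) \sum_(y | rootY y == k) p x y) * r q0 * pQ q0 =
         (\sum_(x | rootX x == k) pX x) * (\sum_(y | rootY y == k) pY y) * (r q0 * r q0).
    rewrite big_distrlr !mulr_suml; apply: eq_bigr => x xk.
    by rewrite !mulr_suml; apply: eq_bigr => y yk; apply: component_factor.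
  rewrite xyS xS yS; lra.
have yk0 : rootY y0 == k by rewrite /k (rootX_rootY pxy0).
have := component_factor q0 (eqxx k) yk0; rewrite pQS => h.
by apply: (mulIf (lt0r_neq0 rq0)); apply: (mulIf (lt0r_neq0 rq0)); lra.
Qed.

End Component.

Lemma markov_chains_saturable : saturable p.
Proof.
rewrite /saturable /cmi; apply: big1 => x _; apply: big1 => y _; apply: big1 => k _.
case: ifPn => // J0.
have kx : k = rootX x by move: J0; rewrite /joint_Qstar; case: eqP; rewrite ?ltxx.
have pxy : 0 < p x y by move: J0; rewrite /joint_Qstar /Qstar kx eqxx.
have pXY0 : pX x * pY y != 0.
  by rewrite mulf_neq0 // lt0r_neq0 // (lt_le_trans pxy) ?le_pX ?le_pY.
rewrite margAC_joint_Qstar margBC_joint_Qstar // kx -(rootX_rootY pxy).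
by rewrite /joint_Qstar /Qstar eqxx (cond_indep_given_Qstar pxy) divff ?ln1 ?mulr0.
Qed.

End FromMarkovChains.

Theorem lemmaA1 (R : realType) (X Y : finType) (p : X -> Y -> R)
  (hp : is_pmf2 p) :
  saturable p <->
  exists (Q : finType) (W : X -> Y -> Q -> R),
    (forall x y, is_pmf1 (W x y)) /\
    (* X - Q - Y *)
    markov (fun (x : X) (q : Q) (y : Y) => p x y * W x y q) /\
    (* Q - X - Y *)
    markov (fun (q : Q) (x : X) (y : Y) => p x y * W x y q) /\
    (* Q - Y - X *)
    markov (fun (q : Q) (y : Y) (x : X) => p x y * W x y q).
Proof.
have [p_ge0 _] := hp; split => [sat|[Q [W [W_pmf [XQY [QXY QYX]]]]]]; last first.
  exact: markov_chains_saturable p_ge0 W_pmf XQY QXY QYX.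
pose W x y q : R := if q == Qstar p x y then 1 else 0.
have pW x y q : joint_Qstar p x y q = p x y * W x y q.
  by rewrite /joint_Qstar /W; case: ifP; rewrite ?mulr1 ?mulr0.
exists (X + Y)%type, W; split; [|split; [|split]].
- move=> x y; split=> [q|]; first by rewrite /W; case: ifP.
  by rewrite /W -big_mkcond big_pred1_eq.
- exact: eq_markov (saturable_markov_XQY p_ge0 sat).
- exact: eq_markov (markov_QXY p).
- exact: eq_markov (markov_QYX p_ge0).
Qed.
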